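(* Fix integers $e>1$ and $k\ge1$, and let $m>3$ be a vertex of the finite tree $\mathcal{T}_{e,3}^k$. Then the number of children of $m$ in $\mathcal{T}_{e,3}^k$ equals $$\sum_{j=0}^{\lfloor m/2^e\rfloor}\binom{k}{j}\binom{k-j}{m-j\cdot 2^e}.$$
   Context: For integers $b>1$, $e>1$ and a positive integer $n=\sum_{i=0}^{r} d_i b^i$ written in base $b$ (digits $0\le d_i\le b-1$), the $e$-power base-$b$ happy function is $S_{e,b}(n)=\sum_{i=0}^{r} d_i^e$. A positive integer $n$ is $e$-power $b$-happy if $S_{e,b}^{\ell}(n)=1$ for some $\ell\ge 1$. The tree $\mathcal{T}_{e,b}$ has as vertices all $e$-power $b$-happy numbers, with root $1$; a happy number $n\neq 1$ is a child of the vertex $S_{e,b}(n)$. For $k\ge1$, $\mathcal{T}_{e,b}^k$ is the subtree on the happy numbers having at most $k$ digits in base $b$ (i.e. $n<b^k$); thus the children of a vertex $m$ in $\mathcal{T}_{e,b}^k$ are the happy integers $n$ with $1\le n<b^k$, $n\neq1$, and $S_{e,b}(n)=m$. Binomial coefficients $\binom{a}{c}$ are taken to be $0$ when $c<0$ or $c>a$ (including when $a<0$). *)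

From mathcomp Require Import all_boot.
From mathcomp Require Import boolp.
Set Implicit Arguments. Unset Strict Implicit. Unset Printing Implicit Defensive.

(* base-b digits of n, least significant first (fuel n suffices for b > 1) *)
Fixpoint digits_aux (b fuel n : nat) : seq nat :=
  match fuel with
  | 0 => [::]
  | f.+1 => if n == 0 then [::] else n %% b :: digits_aux b f (n %/ b)
  end.

Definition digits (b n : nat) : seq nat := digits_aux b n n.

Definition S_happy (e b n : nat) : nat := \sum_(d <- digits b n) d ^ e.

Definition happy (e b n : nat) : Prop :=
  0 < n /\ exists l, 0 < l /\ iter l (S_happy e b) n = 1.

Definition children (e b k m : nat) : {set 'I_(b ^ k)} :=
  [set n : 'I_(b ^ k) | [&& 1 <= val n, val n != 1, `[< happy e b n >]
                          & S_happy e b n == m]].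

Definition vertex (e b k m : nat) : Prop := happy e b m /\ m < b ^ k.

From mathcomp Require Import all_boot.
From mathcomp Require Import boolp.
From mathcomp Require Import zify.

(* In base 3 the happy function only sees how many digits equal 1 and how many
   equal 2: S(n) = c1(n) + c2(n) 2^e.  Hence S(n) = m forces c2(n) = j for some
   j <= m / 2^e and c1(n) = m - j 2^e.  Among the k-digit strings, those with i
   ones and j twos are counted by the trinomial C(k, j) C(k - j, i) (both sides
   satisfy the same Pascal-type recurrence in k).  Finally, for m > 1 every
   preimage n of the happy number m is itself happy, positive and different
   from 1, so the children of m are exactly the preimages of m below 3^k. *)

Section Digits.

Variable b : nat.
Hypothesis b_gt1 : 1 < b.

Lemma digits_aux_fuel f1 f2 n : n <= f1 -> n <= f2 ->
  digits_aux b f1 n = digits_aux b f2 n.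
Proof.
elim: f1 f2 n => [|f1 IH] [|f2] n /=; rewrite ?leqn0.
- by [].
- by move=> /eqP ->.
- by move=> _ /eqP ->.
case: eqP => // /eqP n_neq0 le_n_f1 le_n_f2.
have : n %/ b < n by rewrite ltn_Pdiv // lt0n.
by move=> lt_nb_n; congr (_ :: _); apply: IH; lia.
Qed.

Lemma digitsE n :
  digits b n = if n == 0 then [::] else n %% b :: digits b (n %/ b).
Proof.
rewrite /digits; case: n => [|n] //=; congr (_ :: _).
have : n.+1 %/ b < n.+1 by rewrite ltn_Pdiv.
by move=> lt_nb_n; apply: digits_aux_fuel; lia.
Qed.

Lemma digits1 : digits b 1 = [:: 1].
Proof. by rewrite digitsE /= modn_small // divn_small. Qed.

Lemma digits_lt n d : d \in digits b n -> d < b.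
Proof.
rewrite /digits; elim: n {2}n => [|f IH] n /=; first by rewrite in_nil.
case: eqP => _; first by rewrite in_nil.
by rewrite inE => /orP [/eqP -> | /IH]; rewrite // ltn_mod ltnW.
Qed.

Definition digit_sum (F : nat -> nat) n := \sum_(d <- digits b n) F d.

Lemma digit_sum0 F : digit_sum F 0 = 0.
Proof. by rewrite /digit_sum /digits big_nil. Qed.

Lemma digit_sumMD F q d : F 0 = 0 -> d < b ->
  digit_sum F (b * q + d) = F d + digit_sum F q.
Proof.
move=> F0 lt_db; rewrite /digit_sum digitsE.
case: eqP => [qd0|_].
  have [-> ->] : q = 0 /\ d = 0 by lia.
  by rewrite F0 /digits big_nil.
rewrite big_cons mulnC modnMDl modn_small // divnMDl ?divn_small ?addn0 //.
lia.
Qed.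

Definition digit_count c := digit_sum (fun d => d == c).

Lemma digit_countMD c q d : 0 < c -> d < b ->
  digit_count c (b * q + d) = (d == c) + digit_count c q.
Proof. by move=> c_gt0; apply: digit_sumMD; case: c c_gt0. Qed.

End Digits.

Lemma big_nat_mul_euclid (P : nat -> nat) b a :
  \sum_(0 <= n < b * a) P n = \sum_(0 <= q < a) \sum_(0 <= d < b) P (b * q + d).
Proof.
elim: a => [|a IH]; first by rewrite muln0 !big_geq.
rewrite mulnSr big_nat_recr //= -IH (@big_cat_nat _ _ _ (b * a)) ?leq_addr //=.
rewrite -{2}[b * a]add0n big_addn addKn.
by congr (_ + _); apply: eq_bigr => d _; rewrite addnC.
Qed.

Lemma S_happy3 e n : 0 < e ->
  S_happy e 3 n = digit_count 3 1 n + digit_count 3 2 n * 2 ^ e.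
Proof.
move=> e_gt0; rewrite /S_happy /digit_count /digit_sum big_distrl -big_split.
apply: eq_big_seq => d /(@digits_lt 3 isT) lt_d3.
by case: d lt_d3 => [|[|[|d]]] //= _; rewrite ?exp0n ?exp1n ?mul1n.
Qed.

Definition ternary_count k i j := \sum_(0 <= n < 3 ^ k)
  ((digit_count 3 1 n == i) && (digit_count 3 2 n == j)).

Definition trinomial k i j := 'C(k, j) * 'C(k - j, i).

Lemma ternary_countS k i j : ternary_count k.+1 i j =
  ternary_count k i j + (if i is i'.+1 then ternary_count k i' j else 0)
                      + (if j is j'.+1 then ternary_count k i j' else 0).
Proof.
rewrite /ternary_count expnS big_nat_mul_euclid.
under eq_bigr do rewrite !big_nat_recl // big_geq // !digit_countMD //=.
by case: i => [|i]; case: j => [|j]; rewrite ?addn0 -?big_split;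
  apply: eq_bigr => q _; rewrite !add0n !add1n /= ?eqSS ?andbF ?addn0 ?addnA.
Qed.

Lemma trinomialS k i j : trinomial k.+1 i j =
  trinomial k i j + (if i is i'.+1 then trinomial k i' j else 0)
                  + (if j is j'.+1 then trinomial k i j' else 0).
Proof.
rewrite /trinomial; case: i => [|i]; case: j => [|j];
  rewrite ?bin0 ?subn0 ?muln1 ?mul1n ?addn0 ?subSS ?binS //.
have [lt_jk|le_kj] := ltnP j k.
  by rewrite -(subnSK lt_jk) binS mulnDl mulnDr.
have -> : k - j = 0 by lia.
by rewrite bin_small ?ltnS // bin0n !muln0.
Qed.

Lemma ternary_count_trinomial k i j : ternary_count k i j = trinomial k i j.
Proof.
elim: k i j => [|k IH] i j; last first.
  by rewrite ternary_countS trinomialS; case: i => [|i]; case: j => [|j]; rewrite !IH.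
rewrite /ternary_count /trinomial expn0 big_nat1 /digit_count !digit_sum0.
by case: i => [|i]; case: j => [|j].
Qed.

Lemma S_happy3_eq_sum e m n : 0 < e ->
  (S_happy e 3 n == m : nat) = \sum_(0 <= j < (m %/ 2 ^ e).+1)
    ((digit_count 3 1 n == m - j * 2 ^ e) && (digit_count 3 2 n == j)).
Proof.
move=> e_gt0; rewrite S_happy3 //.
set x := digit_count 3 1 n; set y := digit_count 3 2 n.
rewrite (eq_bigr (fun j => if j == y then (x == m - y * 2 ^ e) : nat else 0));
  last by move=> j _; case: (eqVneq j y) => [->|_]; rewrite ?eqxx ?andbT ?andbF.
rewrite -big_mkcond big_nat1_eq /= ltnS leq_divRL ?expn_gt0 //.
case: leqP => [le_ym|lt_my]; first by rewrite -[X in _ == X](subnK le_ym) eqn_add2r.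
by case: eqP => // sum_m; move: lt_my; rewrite -sum_m; lia.
Qed.

Lemma in_children e b k m (n : 'I_(b ^ k)) : 1 < b -> 1 < m -> happy e b m ->
  (n \in children e b k m) = (S_happy e b n == m).
Proof.
move=> b_gt1 m_gt1 [_ [l [l_gt0 iter_m]]].
rewrite inE; have [Sn_m|_] := eqVneq (S_happy e b n) m; last by rewrite !andbF.
have n_gt0 : 0 < n.
  by move: Sn_m; case: (val n) => // /esym; rewrite /S_happy /digits big_nil; lia.
have n_neq1 : val n != 1.
  by apply/eqP => n1; move: Sn_m; rewrite n1 /S_happy digits1 // big_seq1 exp1n; lia.
rewrite n_gt0 n_neq1 asboolT //; split => //.
by exists l.+1; rewrite iterSr Sn_m.
Qed.

Lemma card_children e b k m : 1 < b -> 1 < m -> happy e b m ->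
  #|children e b k m| = \sum_(0 <= n < b ^ k) (S_happy e b n == m).
Proof.
move=> b_gt1 m_gt1 happy_m; rewrite -sum1_card big_mkcond /= big_mkord.
by apply: eq_bigr => n _; rewrite in_children.
Qed.

Theorem mainTheorem4 (e k m : nat) :
  1 < e -> 1 <= k -> vertex e 3 k m -> 3 < m ->
  #|children e 3 k m| =
    \sum_(0 <= j < (m %/ 2 ^ e).+1) 'C(k, j) * 'C(k - j, m - j * 2 ^ e).
Proof.
move=> e_gt1 _ [happy_m _] m_gt3.
have e_gt0 : 0 < e by apply: ltnW.
have m_gt1 : 1 < m by apply: ltn_trans m_gt3.
rewrite card_children //.
under eq_bigr do rewrite S_happy3_eq_sum //.
rewrite exchange_big /=; apply: eq_bigr => j _.
exact: ternary_count_trinomial.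
Qed.
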